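(* Let $G$ be an execution graph, $T$ a thread, and $q$ such that the await iterations $q$ and $q+1$ of $T$ in $G$ exist. Then $\mathit{end}_G^T(q)<\mathit{start}_G^T(q+1)$.
   Context: Programs. There are finite sets $\mathit{Register}$, $\mathit{Value}$, $\mathit{Location}$; $\mathit{State}=\mathit{Register}\to\mathit{Value}$; an update is a partial map $\mathit{Register}\rightharpoonup\mathit{Value}$, and $(\sigma\ll\mu)(r)=\mu(r)$ if $r\in\mathrm{Dom}(\mu)$, else $\sigma(r)$. Events are reads $R^m(x)$, writes $W^m(x,v)$, fences $F^m$, error $E$. A program consists of finitely many threads $T$, each with a finite statement sequence $P_T(0),\dots,P_T(|P_T|-1)$. A statement is $\mathtt{step}(\epsilon,\delta)$ with $\epsilon:\mathit{State}\to\mathit{Event}$, $\delta:\mathit{State}\times(\mathit{Value}\cup\{\bot\})\to\mathit{Update}$, or $\mathtt{await}(n,\kappa)$ with $n\in\mathbb N$, $\kappa:\mathit{State}\to\{0,1\}$. Syntactic restriction: if $P_T(k)=\mathtt{await}(n,\cdot)$ then $n\le k$ and no $P_T(k')$ with $k'\in[k-n:k)$ is an await. ($[a:b)=\{a,\dots,b-1\}$.) An execution graph $G$ has a set $G.\mathrm E$ of triples $\langle T,t,e\rangle$ and a partial reads-from map $G.\mathrm{rf}$ from reads to writes. Thread-local semantics: $k_G^T(0)=0$, $\sigma_G^T(0)$ fixed; if $k_G^T(t)\ge|P_T|$ or no triple $\langle T,t,\cdot\rangle$ is in $G.\mathrm E$, execution stops ($N_G^T=t$). Otherwise with $S=P_T(k_G^T(t))$: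 $e_G^T(t)=\epsilon(\sigma_G^T(t))$ for $S=\mathtt{step}(\epsilon,\cdot)$, $F^{\mathrm{rlx}}$ for an await; $v_G^T(t)$ is the value of the write that $G.\mathrm{rf}$ assigns to $\langle T,t,e_G^T(t)\rangle$ if this is a read with defined rf, else $\bot$. For a step: $k_G^T(t+1)=k_G^T(t)+1$; if $e_G^T(t)$ is a read with $v_G^T(t)=\bot$ then $N_G^T=t+1$, $\sigma_G^T(t+1)=\sigma_G^T(t)$, else $\sigma_G^T(t+1)=\sigma_G^T(t)\ll\delta(\sigma_G^T(t),v_G^T(t))$. For $\mathtt{await}(n,\kappa)$: $\sigma_G^T(t+1)=\sigma_G^T(t)$ and $k_G^T(t+1)=k_G^T(t)+1$ if $\kappa(\sigma_G^T(t))=0$, else $k_G^T(t)-n$. Awaits: $\mathit{end}_G^T(0)<\mathit{end}_G^T(1)<\cdots$ enumerate the steps $t$ (with $t<N_G^T$) at which $P_T(k_G^T(t))$ is an await; $\mathit{len}_G^T(q)=n$ where $P_T(k_G^T(\mathit{end}_G^T(q)))=\mathtt{await}(n,\cdot)$; $\mathit{start}_G^T(q)=\mathit{end}_G^T(q)-\mathit{len}_G^T(q)$. *)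

From Stdlib Require Import List.
From mathcomp Require Import all_boot.

Set Implicit Arguments.
Unset Strict Implicit.
Unset Printing Implicit Defensive.

Section Syntax.
Variables (Mode : Type) (Reg Val Loc : finType).

Inductive Event :=
  | ERead of Mode & Loc
  | EWrite of Mode & Loc & Val
  | EFence of Mode
  | EError.

Definition is_read (e : Event) : bool :=
  if e is ERead _ _ then true else false.

Definition State := Reg -> Val.
Definition Update := Reg -> option Val.

Definition upd (s : State) (mu : Update) : State :=
  fun r => match mu r with Some v => v | None => s r end.

(* statements; [option Val] is Value ∪ {⊥} (None = ⊥) *)
Inductive Stmt :=
  | Step of (State -> Event) & (State -> option Val -> Update)
  | Await of nat & (State -> bool).

Definition is_await (s : option Stmt) : bool :=
  if s is Some (Await _ _) then true else false.

End Syntax.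

Arguments ERead {Mode Val Loc}.
Arguments EWrite {Mode Val Loc}.
Arguments EFence {Mode Val Loc}.
Arguments EError {Mode Val Loc}.
Arguments Step {Mode Reg Val Loc}.
Arguments Await {Mode Reg Val Loc}.

Section Semantics.
Variables (Mode : Type) (rlx : Mode) (Reg Val Loc : finType) (Thread : finType).

Local Notation Event := (Event Mode Val Loc).
Local Notation State := (State Reg Val).
Local Notation Stmt := (Stmt Mode Reg Val Loc).

Definition Program := Thread -> seq Stmt.

Definition wf_program (P : Program) : Prop :=
  forall T k n kap, nth_error (P T) k = Some (Await n kap) ->
    n <= k /\ forall k', k - n <= k' < k -> ~~ is_await (nth_error (P T) k').

Record ExecGraph := {
  gE  : Thread -> nat -> Event -> Prop;
  grf : Thread -> nat -> Event -> option (Thread * nat * Event)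
}.

Definition rfval (G : ExecGraph) (T : Thread) (t : nat) (e : Event) : option Val :=
  if is_read e then
    match grf G T t e with
    | Some (_, _, EWrite _ _ v) => Some v
    | _ => None
    end
  else None.

Variables (P : Program) (init : Thread -> State) (G : ExecGraph) (T : Thread).

Definition cur_event (t : nat) (k : nat) (s : State) : Event :=
  match nth_error (P T) k with
  | Some (Step eps _) => eps s
  | Some (Await _ _) => EFence rlx
  | None => EError
  end.

(* (k_G^T(t), sigma_G^T(t)); past N_G^T the values are irrelevant. *)
Fixpoint config (t : nat) : nat * State :=
  match t with
  | 0 => (0, init T)
  | t'.+1 =>
      let (k, s) := config t' in
      match nth_error (P T) k with
      | Some (Step eps delta) =>
          let e := eps s in
          let v := rfval G T t' e in
          (k.+1, if is_read e && (if v is None then true else false)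
                 then s else upd s (delta s v))
      | Some (Await n kap) => (if kap s then k - n else k.+1, s)
      | None => (k, s)
      end
  end.

Definition kk (t : nat) : nat := (config t).1.
Definition sigma (t : nat) : State := (config t).2.
Definition ev (t : nat) : Event := cur_event t (kk t) (sigma t).
Definition vv (t : nat) : option Val := rfval G T t (ev t).

(* execution stops at t (N = t) *)
Definition stops_at (t : nat) : Prop :=
  size (P T) <= kk t \/ ~ (exists e, gE G T t e).
(* execution stops right after step t (N = t+1): a read with value ⊥ *)
Definition stops_after (t : nat) : Prop :=
  is_read (ev t) /\ vv t = None.

(* t < N_G^T *)
Definition active (t : nat) : Prop :=
  (forall t', t' <= t -> ~ stops_at t') /\ (forall t', t' < t -> ~ stops_after t').

Definition await_step (t : nat) : Prop :=
  active t /\ is_await (nth_error (P T) (kk t)).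

(* is_end q t  <->  end_G^T(q) = t  (increasing enumeration of await steps) *)
Inductive is_end : nat -> nat -> Prop :=
  | is_end0 t : await_step t -> (forall t', t' < t -> ~ await_step t') -> is_end 0 t
  | is_endS q t0 t : is_end q t0 -> t0 < t -> await_step t ->
      (forall t', t0 < t' < t -> ~ await_step t') -> is_end q.+1 t.

Definition await_len (t : nat) : nat :=
  match nth_error (P T) (kk t) with
  | Some (Await n _) => n
  | _ => 0
  end.

(* start_G^T(q) = end_G^T(q) - len_G^T(q), given t = end_G^T(q) *)
Definition start_of (t : nat) : nat := t - await_len t.

End Semantics.

(* Between the awaits ending iterations q and q+1 (at steps t1 < t2) only
   step statements execute, so each step advances the program counter by one.
   If the await at t2 sits at position k, has length n, and t2 - t1 - 1 < n,
   then the position reached right after t1 (the successor of the first await,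
   or its jump target) lies in the window [k - n, k).  The syntactic
   restriction forbids two distinct awaits from lying in each other's windows,
   and an await jumping back to itself returns to k after exactly n steps. *)

From Pilot Require Import Defs.
From Stdlib Require Import List.
From mathcomp Require Import all_boot zify.

Set Implicit Arguments.
Unset Strict Implicit.
Unset Printing Implicit Defensive.

Section AwaitWindows.
Variables (Mode : Type) (Reg Val Loc Thread : finType)
  (P : Program Mode Reg Val Loc Thread) (T : Thread).

Hypothesis wfP : wf_program P.

Lemma wf_await_apart k n kap k' n' kap' :
  nth_error (P T) k = Some (Await n kap) ->
  nth_error (P T) k' = Some (Await n' kap') ->
  k' < k -> k' < k - n.
Proof.
move=> Pk Pk' lt_k'k; have [_ no_await] := wfP Pk.
rewrite ltnNge; apply/negP => le_k'.
by have := no_await k'; rewrite le_k' lt_k'k Pk' => /(_ isT).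
Qed.

Lemma wf_next_await_len_le k1 n1 kap1 k2 n2 kap2 (jump : bool) m :
  nth_error (P T) k1 = Some (Await n1 kap1) ->
  nth_error (P T) k2 = Some (Await n2 kap2) ->
  k2 = (if jump then k1 - n1 else k1.+1) + m -> n2 <= m.
Proof.
move=> Pk1 Pk2 def_k2; rewrite leqNgt; apply/negP => lt_mn2.
have [le_n1k1 _] := wfP Pk1.
case: jump def_k2 => def_k2; last first.
  by have := wf_await_apart Pk2 Pk1; lia.
case: (ltngtP k1 k2) => [lt12 | lt21 | eq12].
- by have := wf_await_apart Pk2 Pk1 lt12; lia.
- by have := wf_await_apart Pk1 Pk2 lt21; lia.
- by move: Pk2; rewrite -eq12 Pk1 => -[eq_n _]; lia.
Qed.

End AwaitWindows.

Section ProgramCounter.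
Variables (Mode : Type) (rlx : Mode) (Reg Val Loc Thread : finType)
  (P : Program Mode Reg Val Loc Thread) (init : Thread -> State Reg Val)
  (G : ExecGraph Mode Val Loc Thread) (T : Thread).

Local Notation kk := (kk P init G T).
Local Notation sigma := (sigma P init G T).
Local Notation active := (active rlx P init G T).
Local Notation await_step := (await_step rlx P init G T).
Local Notation is_end := (is_end rlx P init G T).

Lemma kkS t : kk t.+1 = match nth_error (P T) (kk t) with
  | Some (Step _ _) => (kk t).+1
  | Some (Await n kap) => if kap (sigma t) then kk t - n else (kk t).+1
  | None => kk t end.
Proof.
rewrite /Defs.kk /Defs.sigma /=; case: (config _ _ _ _ t) => k s /=.
by case: nth_error => [[]|].
Qed.

Lemma active_le t t' : t' <= t -> active t -> active t'.
Proof.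
move=> le_t't [no_stop no_stop_after].
by split=> u lt_u; [apply: no_stop | apply: no_stop_after]; lia.
Qed.

Lemma active_kk_lt_size t : active t -> kk t < size (P T).
Proof.
case=> /(_ t (leqnn t)) no_stop _; rewrite ltnNge; apply/negP => le_size.
by apply: no_stop; left.
Qed.

Lemma await_stepP t : await_step t ->
  exists n kap, nth_error (P T) (kk t) = Some (Await n kap).
Proof. by case=> _; case: nth_error => [[|n kap]|] // _; exists n, kap. Qed.

Lemma kkS_no_await t : active t -> ~ await_step t -> kk t.+1 = (kk t).+1.
Proof.
move=> act no_await; rewrite kkS.
have : nth_error (P T) (kk t) <> None.
  by apply/nth_error_Some/ltP/active_kk_lt_size.
case def_S: nth_error => [[eps delta|n kap]|] // _.
by case: no_await; split; rewrite ?def_S.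
Qed.

Lemma kk_no_await t t' : t <= t' -> active t' ->
  (forall u, t <= u < t' -> ~ await_step u) -> kk t' = kk t + (t' - t).
Proof.
move=> le_tt'; rewrite -(subnKC le_tt') addKn.
elim: (t' - t) => [|j IHj] act no_await; first by rewrite !addn0.
have act_j : active (t + j) by apply: active_le act; lia.
have no_await_j : ~ await_step (t + j) by apply: no_await; lia.
by rewrite addnS kkS_no_await // IHj ?addnS // => u lt_u; apply: no_await; lia.
Qed.

Lemma is_end_await_step q t : is_end q t -> await_step t.
Proof. by case. Qed.

Lemma is_end_inj q t t' : is_end q t -> is_end q t' -> t = t'.
Proof.
elim: q t t' => [|q IHq] t t' end_t end_t'.
- inversion_clear end_t as [? await_t first_t|].
  inversion_clear end_t' as [? await_t' first_t'|].
  case: (ltngtP t t') => // [lt | gt].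
  + by case: (first_t' t lt).
  + by case: (first_t t' gt).
- inversion_clear end_t as [|? t0 ? end_t0 lt_t0 await_t next_t].
  inversion_clear end_t' as [|? t0' ? end_t0' lt_t0' await_t' next_t'].
  have eq_t0 := IHq _ _ end_t0 end_t0'; subst t0'.
  case: (ltngtP t t') => // [lt | gt].
  + by case: (next_t' t); first lia.
  + by case: (next_t t'); first lia.
Qed.

End ProgramCounter.

Theorem lemma3 (Mode : Type) (rlx : Mode) (Reg Val Loc Thread : finType)
  (P : Program Mode Reg Val Loc Thread) (init : Thread -> State Reg Val)
  (G : ExecGraph Mode Val Loc Thread) (T : Thread) (q t1 t2 : nat) :
  wf_program P ->
  is_end rlx P init G T q t1 ->
  is_end rlx P init G T q.+1 t2 ->
  t1 < start_of P init G T t2.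
Proof.
move=> wfP end_t1 end_t2.
inversion end_t2 as [|? t0 ? end_t0 lt_t12 await_t2 no_await_between].
have eq_t0 := is_end_inj end_t1 end_t0; subst t0.
have [n1 [kap1 P_t1]] := await_stepP (is_end_await_step end_t1).
have [n2 [kap2 P_t2]] := await_stepP await_t2.
have kk_t1S := kkS P init G T t1; rewrite P_t1 in kk_t1S.
have kk_t2 : kk P init G T t2 = kk P init G T t1.+1 + (t2 - t1.+1).
  by apply: (kk_no_await (rlx := rlx)) => //; case: await_t2.
rewrite kk_t1S in kk_t2.
have := wf_next_await_len_le wfP P_t1 P_t2 kk_t2.
by rewrite /start_of /await_len P_t2; lia.
Qed.
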